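(* Let $X=\mathbb S^{n_1}\times\cdots\times\mathbb S^{n_l}$ with $1\le n_1<\cdots<n_l$, and let $f:X\to X$ be a $C^1$ quasi-unipotent map such that $a_{n_1},\ldots,a_{n_l}$ are the basic eigenvalues of $f_*$ (so each $a_{n_i}=\pm1$). Then: (a) if $(-1)^{n_i}a_{n_i}=1$ for all $1\le i\le l$, then $\mathrm{MPer}_L(f)=\{1\}$; (b) if $(-1)^{n_i}a_{n_i}=-1$ for some $1\le i\le l$, then $\mathrm{MPer}_L(f)=\emptyset$.
   Context: Basic eigenvalues: integers $a_{n_1},\ldots,a_{n_l}$ such that for every $k$ the induced map $f_{*k}$ on $H_k(X;\mathbb Q)$ is diagonal in a suitable basis with diagonal entries (with multiplicity) the products $a_{n_{i_1}}\cdots a_{n_{i_s}}$ over all subsets $\{i_1<\cdots<i_s\}$ with $n_{i_1}+\cdots+n_{i_s}=k$. A map is quasi-unipotent if all eigenvalues of all $f_{*k}$ are roots of unity. The Lefschetz zeta function is $\zeta_f(t)=\exp(\sum_{m\ge1}L(f^m)t^m/m)$ with $L(f)=\sum_k(-1)^k\operatorname{trace} f_{*k}$. If $\zeta_f(t)\ne1$, it can be written (possibly in several ways) as a finite product $\zeta_f(t)=\prod_{i=1}^{N}(1+\Delta_i t^{r_i})^{m_i}$ with $\Delta_i\in\{\pm1\}$, $r_i$ positive integers and $m_i$ nonzero integers; the minimal set of Lefschetz periods $\mathrm{MPer}_L(f)$ is the intersection of the sets $\{r_1,\ldots,r_N\}$ over all such representations. If $\zeta_f(t)=1$, $\mathrm{MPer}_L(f):=\emptyset$.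 *)

From HB Require Import structures.
From mathcomp Require Import all_boot all_order all_algebra all_field.
Set Implicit Arguments. Unset Strict Implicit. Unset Printing Implicit Defensive.
Import Order.TTheory GRing.Theory Num.Theory.
Local Open Scope ring_scope.

(* Product of spheres X = S^{n_0} x ... x S^{n_(l-1)}, with n : 'I_l -> nat.
   A basis of H_k(X;Q) is indexed by the subsets S of {0..l-1} with
   sum_{i in S} n_i = k. *)
Definition Sk (l : nat) (n : 'I_l -> nat) (k : nat) : {set {set 'I_l}} :=
  [set S : {set 'I_l} | (\sum_(i in S) n i)%N == k].

Definition topdeg (l : nat) (n : 'I_l -> nat) : nat := (\sum_(i < l) n i)%N.

(* f_{*k} : H_k(X;Q) -> H_k(X;Q), as a family of rational square matrices. *)
Definition hom_data (l : nat) (n : 'I_l -> nat) :=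
  forall k : nat, 'M[rat]_(#|Sk n k|).

Definition basic_eigenvalues (l : nat) (n : 'I_l -> nat) (M : hom_data n)
    (a : 'I_l -> int) : Prop :=
  forall k : nat, exists P : 'M[rat]_(#|Sk n k|),
    P \in unitmx /\
    P *m M k *m invmx P =
      diag_mx (\row_j \prod_(i in @enum_val _ (pred_of_set (Sk n k)) j) (a i)%:~R).

Definition quasi_unipotent (l : nat) (n : 'I_l -> nat) (M : hom_data n) : Prop :=
  forall (k : nat) (z : algC), root (char_poly (map_mx (ratr : rat -> algC) (M k))) z ->
    exists m : nat, (0 < m)%N /\ z ^+ m = 1.

Definition lefschetz (l : nat) (n : 'I_l -> nat) (M : hom_data n) (m : nat) : rat :=
  \sum_(k < (topdeg n).+1) (-1) ^+ k * \tr (M k ^+ m).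

(* Formal power series are represented by their coefficient sequences.
   g(t) = sum_{m>=1} L_m t^m / m, truncated below degree N. *)
Definition log_zeta_trunc (L : nat -> rat) (N : nat) : {poly rat} :=
  \poly_(i < N) (if i == 0%N then 0 else L i / i%:R).

(* coefficient of t^j in zeta(t) = exp(sum_{m>=1} L_m t^m/m) *)
Definition zeta_coef (L : nat -> rat) (j : nat) : rat :=
  (\sum_(k < j.+1) (log_zeta_trunc L j.+1) ^+ k * (k`!%:R)^-1)`_j.

Definition zeta_is_one (L : nat -> rat) : Prop :=
  forall j : nat, zeta_coef L j = (j == 0%N)%:R.

(* a factor (1 + Delta t^r)^e is encoded as ((d, r), e) with Delta = (-1)^d *)
Definition factor_ok (x : bool * nat * int) : bool :=
  (0 < x.1.2)%N && (x.2 != 0).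

Definition factor_base (x : bool * nat * int) : {poly rat} :=
  1 + ((-1) ^+ x.1.1) *: 'X^(x.1.2).

Definition pos_part (s : seq (bool * nat * int)) : {poly rat} :=
  \prod_(x <- s | 0 < x.2) factor_base x ^+ `|x.2|%N.

Definition neg_part (s : seq (bool * nat * int)) : {poly rat} :=
  \prod_(x <- s | x.2 < 0) factor_base x ^+ `|x.2|%N.

(* zeta(t) = prod_i (1 + Delta_i t^{r_i})^{m_i} as formal power series,
   written equivalently (multiplying by the invertible factors with m_i<0) as
   zeta(t) * prod_{m_i<0} (1+Delta_i t^{r_i})^{-m_i} = prod_{m_i>0} (...)^{m_i}. *)
Definition zeta_rep (L : nat -> rat) (s : seq (bool * nat * int)) : Prop :=
  all factor_ok s /\
  forall j : nat,
    \sum_(i < j.+1) zeta_coef L i * (neg_part s)`_(j - i) = (pos_part s)`_j.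

Definition MPerL (L : nat -> rat) (r : nat) : Prop :=
  ~ zeta_is_one L /\
  forall s : seq (bool * nat * int), zeta_rep L s -> r \in [seq x.1.2 | x <- s].

From HB Require Import structures.
From mathcomp Require Import all_boot all_order all_algebra all_field.
From mathcomp Require Import ring zify.
Import Order.TTheory GRing.Theory Num.Theory.
Set Implicit Arguments.
Unset Strict Implicit.
Unset Printing Implicit Defensive.
Local Open Scope ring_scope.

(* Quasi-unipotence forces every basic eigenvalue a_i to be 1 or -1, since a_i is
   the eigenvalue of f_{*n_i} on the class of the factor S^{n_i}.  Diagonalising
   f_* gives L(f^m) = prod_i (1 + (-1)^{n_i} a_i^m), which only depends on the
   parity of m: it is 2 alpha for odd m and 2 beta for even m, where
   alpha = 2^{l-1} if all (-1)^{n_i} a_i are 1 and alpha = 0 otherwise.  Hence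
   zeta_f = (1 - t)^{-(alpha + beta)} (1 + t)^{alpha - beta}.  If alpha <> 0, the
   coefficient L(f) of t in zeta_f is nonzero, and factors 1 +- t^r with r >= 2
   cannot produce it, so 1 is a period of every representation.  If alpha = 0,
   zeta_f = (1 - t)^{-beta} (1 + t)^{-beta} = (1 - t^2)^{-beta} has two
   representations with disjoint sets of periods.
   Identities between zeta_f and finite products are checked modulo t^K: both
   sides have constant term 1 and the same logarithmic derivative t d/dt log. *)

Section TruncatedSeries.
Variable R : numDomainType.
Implicit Types (p q : {poly R}) (K : nat).

Definition eq_upto K p q := forall i, (i < K)%N -> p`_i = q`_i.

Lemma eq_upto_trans K p q u : eq_upto K p q -> eq_upto K q u -> eq_upto K p u.
Proof. by move=> pq qu i iK; rewrite pq // qu. Qed.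

Lemma eq_upto_le K K' p q : (K' <= K)%N -> eq_upto K p q -> eq_upto K' p q.
Proof. by move=> le_K pq i iK'; rewrite pq // (leq_trans iK'). Qed.

Lemma eq_uptoD K p q p' q' :
  eq_upto K p p' -> eq_upto K q q' -> eq_upto K (p + q) (p' + q').
Proof. by move=> pp' qq' i iK; rewrite !coefD pp' // qq'. Qed.

Lemma eq_uptoM K p q p' q' :
  eq_upto K p p' -> eq_upto K q q' -> eq_upto K (p * q) (p' * q').
Proof.
move=> pp' qq' i iK; rewrite !coefM; apply: eq_bigr => -[j /= ji] _.
by rewrite pp' ?qq' //; apply: leq_ltn_trans iK; rewrite ?leq_subr // -ltnS.
Qed.

Lemma eq_uptoMl K p q q' : eq_upto K q q' -> eq_upto K (p * q) (p * q').
Proof. exact: eq_uptoM. Qed.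

Lemma eq_uptoMr K p p' q : eq_upto K p p' -> eq_upto K (p * q) (p' * q).
Proof. by move/eq_uptoM; apply. Qed.

Lemma eq_upto_prod K (T : eqType) (s : seq T) (P : pred T) (F G : T -> {poly R}) :
  (forall x, x \in s -> P x -> eq_upto K (F x) (G x)) ->
  eq_upto K (\prod_(x <- s | P x) F x) (\prod_(x <- s | P x) G x).
Proof.
move=> FG; rewrite big_seq_cond [X in eq_upto _ _ X]big_seq_cond.
elim/big_rec2: _ => [//|x p q /andP[xs Px] pq].
exact: eq_uptoM (FG x xs Px) pq.
Qed.

Lemma eq_upto_expr K p q e : eq_upto K p q -> eq_upto K (p ^+ e) (q ^+ e).
Proof.
move=> pq; rewrite -(card_ord e) -!prodr_const.
by apply: eq_upto_prod.
Qed.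

Lemma coefM_low p q a b i :
  eq_upto a p 0 -> eq_upto b q 0 -> (i < a + b)%N -> (p * q)`_i = 0.
Proof.
move=> p0 q0 iab; rewrite coefM big1 // => -[j /= ji] _.
have [ja | aj] := ltnP j a; first by rewrite p0 ?coef0 ?mul0r.
by rewrite q0 ?coef0 ?mulr0 //; lia.
Qed.

Lemma coefX_low p k i : p`_0 = 0 -> (i < k)%N -> (p ^+ k)`_i = 0.
Proof.
move=> p0; elim: k i => [//|k IHk] i ik; rewrite exprS.
apply: (@coefM_low _ _ 1 k) => // [[|//] _|j jk]; by rewrite ?p0 ?coef0 ?IHk.
Qed.

Definition tderiv p := 'X * p^`().

Lemma coef_tderiv p i : (tderiv p)`_i = i%:R * p`_i.
Proof. by rewrite coefXM; case: i => [|i]; rewrite ?mul0r // coef_deriv mulr_natl. Qed.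

Lemma tderivM p q : tderiv (p * q) = tderiv p * q + p * tderiv q.
Proof. by rewrite /tderiv derivM; ring. Qed.

(* Since [lam`_0 = 0], the coefficient of t^i in [tderiv p = p * lam] determines
   [p`_i] from the lower ones. *)
Lemma tderiv_eq_upto_uniq K (lam p q : {poly R}) : lam`_0 = 0 -> p`_0 = q`_0 ->
  eq_upto K (tderiv p) (p * lam) -> eq_upto K (tderiv q) (q * lam) -> eq_upto K p q.
Proof.
move=> lam0 pq0 p_lam q_lam; set d := p - q.
have d_lam : eq_upto K (tderiv d) (d * lam).
  by move=> i iK; rewrite /d /tderiv derivB mulrBr mulrBl !coefB -!/(tderiv _) p_lam ?q_lam.
suff d0 : forall i, (i < K)%N -> d`_i = 0.
  by move=> i iK; apply/eqP; rewrite -subr_eq0 -coefB d0.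
elim/ltn_ind=> -[_|i IHi iK]; first by rewrite coefB pq0 subrr.
have := d_lam _ iK; rewrite coef_tderiv coefM big_ord_recr /= subnn lam0 mulr0 addr0.
rewrite big1 => [/eqP|[j /= ji] _]; last by rewrite IHi ?mul0r //; lia.
by rewrite mulf_eq0 pnatr_eq0 => /eqP.
Qed.

Lemma tderiv_expr_eq_upto K p lam e : eq_upto K (tderiv p) (p * lam) ->
  eq_upto K (tderiv (p ^+ e)) (p ^+ e * (lam *+ e)).
Proof.
move=> p_lam; elim: e => [|e IHe].
  by move=> i _; rewrite /tderiv expr0 derivC mulr0 mulr0n mulr0.
rewrite exprSr tderivM mulrSr.
have -> : p ^+ e * p * (lam *+ e + lam) = p ^+ e * (lam *+ e) * p + p ^+ e * (p * lam) by ring.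
exact: eq_uptoD (eq_uptoMr p IHe) (eq_uptoMl (p ^+ e) p_lam).
Qed.

Lemma tderiv_prod_eq_upto K (T : eqType) (s : seq T) (P : pred T) (F Lam : T -> {poly R}) :
  (forall x, x \in s -> P x -> eq_upto K (tderiv (F x)) (F x * Lam x)) ->
  eq_upto K (tderiv (\prod_(x <- s | P x) F x))
    ((\prod_(x <- s | P x) F x) * \sum_(x <- s | P x) Lam x).
Proof.
elim: s => [_|y s IHs F_Lam].
  by rewrite !big_nil => i _; rewrite /tderiv derivC !mulr0.
have {}IHs := IHs (fun x xs => F_Lam x (mem_behead (s := y :: s) xs)).
rewrite !big_cons; case: ifP => Py //; rewrite tderivM.
set p := \prod_(x <- s | P x) F x; set lam := \sum_(x <- s | P x) Lam x.
have -> : F y * p * (Lam y + lam) = F y * Lam y * p + F y * (p * lam) by ring.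
exact: eq_uptoD (eq_uptoMr p (F_Lam y (mem_head y s) Py)) (eq_uptoMl (F y) IHs).
Qed.

(* t d/dt log (1 + c t^r) = - r \sum_(k >= 1) (- c)^k t^(r k) *)
Definition binom_logder_coef (c : R) (r i : nat) : R :=
  if (0 < i)%N && (r %| i)%N then - r%:R * (- c) ^+ (i %/ r) else 0.

Definition binom_logder (c : R) (r K : nat) : {poly R} :=
  \poly_(i < K) binom_logder_coef c r i.

Lemma binom_logder_coef_period1 (c : R) i :
  (0 < i)%N -> binom_logder_coef c 1 i = - (- c) ^+ i.
Proof. by move=> i_gt0; rewrite /binom_logder_coef i_gt0 dvd1n divn1 mulN1r. Qed.

Lemma binom_eq_upto1 (c : R) r : eq_upto r (1 + c *: 'X^r) 1.
Proof. by move=> i ir; rewrite coefD coefZ coefXn (ltn_eqF ir) mulr0 addr0. Qed.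

Lemma tderiv_binom_eq_upto K (c : R) r : (0 < r)%N ->
  eq_upto K (tderiv (1 + c *: 'X^r)) ((1 + c *: 'X^r) * binom_logder c r K).
Proof.
move=> r_gt0 j jK.
rewrite coef_tderiv mulrDl mul1r -scalerAl !coefD !coefZ coefXnM coef1 coefXn.
rewrite !coef_poly jK /binom_logder_coef.
have [jr | rj | ->] := ltngtP j r.
- have r_ndvd_j : (0 < j)%N -> ~~ (r %| j)%N.
    by move=> j_gt0; apply/negP => /(dvdn_leq j_gt0); rewrite leqNgt jr.
  case: j jr jK r_ndvd_j => [|j] _ _ ndvd; first by rewrite mul0r mulr0 addr0.
  by rewrite /= (negbTE (ndvd isT)) !mulr0 add0r mulr0.
- have [k def_j] : exists k, j = (k + r)%N by exists (j - r)%N; rewrite subnK // ltnW.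
  move: rj jK; rewrite def_j addnK -{1}[r]add0n ltn_add2r => k_gt0 jK.
  rewrite (ltn_addl _ r_gt0) (leq_ltn_trans (leq_addr r k) jK) k_gt0 /=.
  rewrite gtn_eqF ?(ltn_addl _ r_gt0) // dvdn_addl // divnDr // divnn r_gt0.
  rewrite /= mulr0 addr0 mulr0; case: (r %| k)%N; last by rewrite mulr0 addr0.
  by rewrite addn1 exprS; ring.
- rewrite r_gt0 dvdnn divnn r_gt0 subnn /= (gtn_eqF r_gt0) if_same mulr0 addr0.
  by rewrite add0r mulr1 expr1 mulNr mulrN opprK.
Qed.

End TruncatedSeries.

Section LefschetzZeta.
Variable L : nat -> rat.
Local Notation G := (log_zeta_trunc L).

Definition exp_trunc (J : nat) : {poly rat} :=
  \sum_(k < J.+1) (k`!%:R)^-1 *: G J.+1 ^+ k.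

Lemma log_zeta_trunc_coef0 K : (G K)`_0 = 0.
Proof. by rewrite coef_poly; case: K. Qed.

Lemma eq_upto_log_zeta_trunc K K' : (K <= K')%N -> eq_upto K (G K') (G K).
Proof. by move=> le_K i iK; rewrite !coef_poly iK (leq_trans iK le_K). Qed.

Lemma coef_tderiv_log_zeta_trunc K i :
  (i < K)%N -> (tderiv (G K))`_i = if i == 0%N then 0 else L i.
Proof.
move=> iK; rewrite coef_tderiv coef_poly iK.
by case: i {iK} => [|i]; rewrite ?mul0r // mulrC divfK // pnatr_eq0.
Qed.

Lemma zeta_coef_exp_trunc j : zeta_coef L j = (exp_trunc j)`_j.
Proof.
rewrite /zeta_coef /exp_trunc; apply: (congr1 (fun p : {poly rat} => p`_j)).
apply: eq_bigr => k _.
by rewrite -polyC_natr polyCV mulrC mul_polyC.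
Qed.

Lemma coef_exp_trunc J i : (i <= J)%N -> (exp_trunc J)`_i = zeta_coef L i.
Proof.
move=> iJ; rewrite zeta_coef_exp_trunc !coef_sum.
rewrite (bigID (fun k : 'I_J.+1 => (k <= i)%N)) /= [X in _ + X]big1 ?addr0 => [|k].
  rewrite (big_ord_widen _ (fun k => ((k`!%:R)^-1 *: G i.+1 ^+ k)`_i) (iJ : i < J.+1)%N).
  apply: eq_bigr => k _; rewrite !coefZ.
  by congr (_ * _); apply: (eq_upto_expr _ (eq_upto_log_zeta_trunc _)).
by rewrite -ltnNge => ik; rewrite coefZ coefX_low ?mulr0 ?log_zeta_trunc_coef0.
Qed.

Lemma zeta_coef0 : zeta_coef L 0 = 1.
Proof.
by rewrite zeta_coef_exp_trunc /exp_trunc big_ord1 expr0 coefZ coef1 invr1 mulr1.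
Qed.

Lemma tderiv_exp_trunc J :
  eq_upto J.+1 (tderiv (exp_trunc J)) (exp_trunc J * tderiv (G J.+1)).
Proof.
set g := G J.+1; set c := fun k => (k`!%:R)^-1 : rat.
have tE : tderiv (exp_trunc J) = (\sum_(k < J) c k *: g ^+ k) * tderiv g.
  rewrite /exp_trunc /tderiv raddf_sum /= big_ord_recl /= derivZ derivC scaler0 add0r.
  rewrite mulr_sumr mulr_suml; apply: eq_bigr => k _.
  rewrite derivZ deriv_exp /bump /= add1n -/g -scalerMnr scalerMnl.
  have -> : (k.+1)`!%:R^-1 *+ k.+1 = c k.
    by rewrite -[LHS]mulr_natl /c factS natrM invfM mulrA mulfV ?mul1r // pnatr_eq0.
  by rewrite add0n -!mul_polyC; ring.
move=> i iJ; rewrite tE /exp_trunc big_ord_recr mulrDl coefD.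
rewrite [X in _ + X](@coefM_low _ _ _ J 1) ?addr0 ?addn1 // => [j jJ|[|//] _].
  by rewrite coef0 coefZ coefX_low ?mulr0 ?log_zeta_trunc_coef0.
by rewrite coef0 coef_tderiv mul0r.
Qed.

Lemma zeta_coef1 : zeta_coef L 1 = L 1.
Proof.
have := tderiv_exp_trunc (ltnSn 1); rewrite coef_tderiv mul1r coefM.
rewrite big_ord_recr big_ord1 /= !coef_tderiv_log_zeta_trunc // mulr0 addr0.
by rewrite !coef_exp_trunc // zeta_coef0 mul1r.
Qed.

End LefschetzZeta.

Section ZetaRepresentation.
Implicit Types (s : seq (bool * nat * int)) (P : pred (bool * nat * int)).

Definition factor_logder (x : bool * nat * int) (K : nat) : {poly rat} :=
  binom_logder ((-1) ^+ x.1.1) x.1.2 K.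

Definition part P s := \prod_(x <- s | P x) factor_base x ^+ `|x.2|%N.

Lemma tderiv_part_eq_upto K P s : all (fun x => 0 < x.1.2)%N s ->
  eq_upto K (tderiv (part P s))
    (part P s * \sum_(x <- s | P x) factor_logder x K *+ `|x.2|%N).
Proof.
move=> /allP r_gt0; apply: tderiv_prod_eq_upto => x xs _.
exact/tderiv_expr_eq_upto/tderiv_binom_eq_upto/r_gt0.
Qed.

Lemma part_eq_upto1 K P s : all (fun x => K <= x.1.2)%N s -> eq_upto K (part P s) 1.
Proof.
move=> /allP K_le_r; rewrite -[X in eq_upto _ _ X](big1_eq (op := *%R) s P).
apply: eq_upto_prod => x xs _; rewrite -(expr1n _ `|x.2|%N).
exact/eq_upto_expr/(eq_upto_le (K_le_r x xs))/binom_eq_upto1.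
Qed.

Lemma intr_mul_posneg (e : int) (c : rat) :
  e%:~R * c = (if 0 < e then c *+ `|e|%N else 0) - (if e < 0 then c *+ `|e|%N else 0).
Proof.
case: e => [[|k]|k] /=; first by rewrite mul0r subrr.
  by rewrite subr0 mulr_natl.
by rewrite add0r NegzE mulrNz mulNr mulr_natl.
Qed.

(* [exp_trunc L j * neg_part s] and [pos_part s] both have logarithmic derivative
   [lamP] below degree [j + 1]. *)
Lemma zeta_rep_coef (L : nat -> rat) s : all (fun x => 0 < x.1.2)%N s ->
  (forall i, (0 < i)%N ->
     L i = \sum_(x <- s) x.2%:~R * binom_logder_coef ((-1) ^+ x.1.1) x.1.2 i) ->
  forall j, \sum_(i < j.+1) zeta_coef L i * (neg_part s)`_(j - i) = (pos_part s)`_j.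
Proof.
move=> r_gt0 Ls j; set K := j.+1.
set E := exp_trunc L j; set Q := neg_part s; set P := pos_part s.
set lamP := \sum_(x <- s | 0 < x.2) factor_logder x K *+ `|x.2|%N.
set lamQ := \sum_(x <- s | x.2 < 0) factor_logder x K *+ `|x.2|%N.
have lam_split : eq_upto K (tderiv (log_zeta_trunc L K) + lamQ) lamP.
  move=> i iK; rewrite coefD coef_tderiv_log_zeta_trunc // !coef_sum.
  under eq_bigr do rewrite coefMn coef_poly iK.
  under [RHS]eq_bigr do rewrite coefMn coef_poly iK.
  case: i {iK} => [|i]; first by rewrite add0r !big1 // => x _; rewrite mul0rn.
  rewrite Ls // (eq_bigr _ (fun x _ => intr_mul_posneg x.2 _)) sumrB -!big_mkcond.
  by rewrite subrK.
have EQ_lam : eq_upto K (tderiv (E * Q)) (E * Q * lamP).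
  set tG := tderiv (log_zeta_trunc L K).
  rewrite tderivM; apply: (@eq_upto_trans _ _ _ (E * tG * Q + E * (Q * lamQ))).
    apply: eq_uptoD (eq_uptoMr Q (@tderiv_exp_trunc L j)) (eq_uptoMl E _).
    exact: (@tderiv_part_eq_upto K (fun x => x.2 < 0) _ r_gt0).
  have -> : E * tG * Q + E * (Q * lamQ) = E * Q * (tG + lamQ) by ring.
  exact: eq_uptoMl.
have lamP0 : lamP`_0 = 0 by rewrite coef_sum big1 // => x _; rewrite coefMn coef_poly mul0rn.
have := tderiv_eq_upto_uniq lamP0 _ EQ_lam (@tderiv_part_eq_upto K (fun x => 0 < x.2) _ r_gt0).
rewrite coef0M (part_eq_upto1 (fun x => x.2 < 0) r_gt0) //.
rewrite (part_eq_upto1 (fun x => 0 < x.2) r_gt0) //.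
rewrite coef_exp_trunc // zeta_coef0 coef1 mulr1 => /(_ erefl j (ltnSn j)) <-.
by rewrite coefM; apply: eq_bigr => -[i /= ij] _; rewrite coef_exp_trunc.
Qed.

Lemma zeta_rep_filter (L : nat -> rat) s : all (fun x => 0 < x.1.2)%N s ->
  (forall i, (0 < i)%N ->
     L i = \sum_(x <- s) x.2%:~R * binom_logder_coef ((-1) ^+ x.1.1) x.1.2 i) ->
  zeta_rep L [seq x <- s | x.2 != 0].
Proof.
move=> r_gt0 Ls; split.
  by rewrite all_filter; apply/sub_all: r_gt0 => x r_gt0; apply/implyP; rewrite /factor_ok r_gt0.
have part_filter P : (forall x, P x -> x.2 != 0) -> part P [seq x <- s | x.2 != 0] = part P s.
  move=> P_neq0; rewrite /part big_filter_cond; apply: eq_bigl => x.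
  by case: (boolP (P x)) => [/P_neq0 -> | _]; rewrite ?andbF.
rewrite /pos_part /neg_part -!/(part _ _) !part_filter; first exact: zeta_rep_coef.
  by move=> x; rewrite lt_neqAle eq_sym => /andP[].
by move=> x; rewrite lt_neqAle => /andP[].
Qed.

Lemma zeta_rep_period1 (L : nat -> rat) s :
  L 1 != 0 -> zeta_rep L s -> 1%N \in [seq x.1.2 | x <- s].
Proof.
move=> L1 [/allP s_ok rep]; apply/negPn/negP => no1.
have r_ge2 : all (fun x => 2 <= x.1.2)%N s.
  apply/allP => x xs; have /andP[r_gt0 _] := s_ok x xs.
  by rewrite ltn_neqAle eq_sym r_gt0 andbT; apply: contra no1 => /eqP <-; apply: map_f.
have := rep 1%N; rewrite big_ord_recr big_ord1 /= subnn.
rewrite /pos_part /neg_part -!/(part _ _) !(part_eq_upto1 _ r_ge2) // !coef1 /=.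
by rewrite mulr0 mulr1 add0r zeta_coef1 => L1_0; rewrite L1_0 eqxx in L1.
Qed.

Section OddEvenLefschetz.
Variables (L : nat -> rat) (alpha beta : int).
Hypothesis L_odd_even : forall m, (0 < m)%N -> L m = (2 * if odd m then alpha else beta)%:~R.

Lemma MPerL_odd_even_neq0 : alpha != 0 -> forall r, MPerL L r <-> r = 1%N.
Proof.
have L1 : alpha != 0 -> L 1 != 0.
  by move=> a0; rewrite L_odd_even // intr_eq0 mulf_eq0 negb_or a0.
move=> a0 r; split => [[_ per_r] | ->].
  (* zeta = (1 - t)^-(alpha + beta) (1 + t)^(alpha - beta) *)
  pose s := [:: (true, 1%N, - (alpha + beta)); (false, 1%N, alpha - beta)].
  suff : r \in [seq x.1.2 | x <- s] by rewrite !inE => /orP[] /eqP.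
  have /per_r : zeta_rep L [seq x <- s | x.2 != 0].
    apply: zeta_rep_filter => // i i_gt0; rewrite L_odd_even // !big_cons big_nil.
    rewrite !binom_logder_coef_period1 // expr0 expr1 opprK expr1n -signr_odd.
    rewrite !(rmorphD, rmorphB, rmorphN, rmorphM, rmorph1).
    by case: (odd i); rewrite /= ?expr0 ?expr1; ring.
  exact/mem_subseq/map_subseq/filter_subseq.
split; last by move=> s; apply: zeta_rep_period1 (L1 a0).
by move/(_ 1%N); rewrite zeta_coef1 /=; apply/eqP; apply: L1.
Qed.

Lemma MPerL_odd_even_eq0 : alpha = 0 -> forall r, ~ MPerL L r.
Proof.
move=> a0 r [_ per_r].
(* zeta = (1 - t)^-beta (1 + t)^-beta = (1 - t^2)^-beta *)
pose s1 := [:: (true, 1%N, - beta); (false, 1%N, - beta)].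
pose s2 := [:: (true, 2%N, - beta)].
have mem_s s : r \in [seq x.1.2 | x <- [seq x <- s | x.2 != 0]] -> r \in [seq x.1.2 | x <- s].
  exact/mem_subseq/map_subseq/filter_subseq.
have /per_r/mem_s : zeta_rep L [seq x <- s1 | x.2 != 0].
  apply: zeta_rep_filter => // i i_gt0; rewrite L_odd_even // a0 !big_cons big_nil.
  rewrite !binom_logder_coef_period1 // expr0 expr1 opprK expr1n -signr_odd.
  rewrite !(rmorphD, rmorphN, rmorphM, rmorph1).
  by case: (odd i); rewrite /= ?expr0 ?expr1; ring.
have /per_r/mem_s : zeta_rep L [seq x <- s2 | x.2 != 0].
  apply: zeta_rep_filter => // i i_gt0; rewrite L_odd_even // a0 !big_cons big_nil.
  rewrite /binom_logder_coef i_gt0 dvdn2 /= expr1 opprK expr1n addr0.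
  by case: (odd i) => /=; rewrite ?mulr0 // !(rmorphD, rmorphN, rmorphM, rmorph1); ring.
by rewrite !inE => /eqP-> /orP[] /eqP.
Qed.

End OddEvenLefschetz.

End ZetaRepresentation.

Lemma int_expr_eq1 (x : int) m : (0 < m)%N -> x ^+ m = 1 -> x = 1 \/ x = -1.
Proof.
move=> m_gt0 xm1; have : x ^+ m \is a GRing.unit by rewrite xm1 unitr1.
by rewrite unitrX_pos // => /orP[] /eqP; [left | right].
Qed.

Lemma conjmx_expr (R : comUnitRingType) k (P A : 'M[R]_k) m : P \in unitmx ->
  (P *m A *m invmx P) ^+ m = P *m A ^+ m *m invmx P.
Proof.
move=> P_unit; elim: m => [|m IHm]; first by rewrite !expr0 mulmx1 mulmxV.
by rewrite !exprS -!mulmxE IHm !mulmxA mulmxKV.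
Qed.

Lemma diag_mx_expr (R : pzSemiRingType) k (d : 'rV[R]_k) m :
  diag_mx d ^+ m = diag_mx (\row_j d 0 j ^+ m).
Proof.
elim: m => [|m IHm]; first by apply/matrixP => i j; rewrite !mxE; case: (i == j).
by rewrite exprS -mulmxE IHm mulmx_diag; congr diag_mx; apply/rowP => j; rewrite !mxE exprS.
Qed.

Lemma eigenvalue_conj_diag (F : fieldType) k (P A : 'M[F]_k) (d : 'rV_k) j :
  P \in unitmx -> P *m A *m invmx P = diag_mx d -> eigenvalue A (d 0 j).
Proof.
move=> P_unit PAP; suff : d 0 j \in eigenvalue (conjmx P A).
  by apply: eigenvalue_conjmx; rewrite ?stablemx_unit ?row_free_unit.
rewrite conjumx // PAP; apply/eigenvalueP; exists (delta_mx 0 j).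
  by rewrite -rowE row_diag_mx.
by apply/eqP => /matrixP/(_ 0 j)/eqP; rewrite !mxE !eqxx oner_eq0.
Qed.

Lemma prod_1add_sign (R : idomainType) (I : finType) (c : I -> R) :
  (forall i, c i ^+ 2 = 1) -> \prod_i (1 + c i) = 2 ^+ #|I| *+ [forall i, c i == 1].
Proof.
move=> c_sqr; have [c1 | /forallPn[i ci_ne1]] := boolP [forall i, c i == 1].
  by rewrite -prodr_const; apply: eq_bigr => i _; rewrite (eqP (forallP c1 i)).
have /eqP ci : c i == -1 by move: (c_sqr i) => /eqP; rewrite sqrf_eq1 (negbTE ci_ne1).
by rewrite (bigD1 i) //= ci subrr mul0r.
Qed.

Section BasicEigenvalues.
Variables (l : nat) (n : 'I_l -> nat) (M : hom_data n) (a : 'I_l -> int).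
Hypothesis basic : basic_eigenvalues M a.

Lemma mxtrace_basic k m :
  \tr (M k ^+ m) = \sum_(S in Sk n k) \prod_(i in S) ((a i)%:~R : rat) ^+ m.
Proof.
have [P [P_unit PMP]] := basic k.
rewrite -[M k ^+ m](mulKmx P_unit) mxtrace_mulC -conjmx_expr // PMP.
rewrite diag_mx_expr mxtrace_diag.
rewrite (big_enum_val (fun S : {set 'I_l} => \prod_(i in S) ((a i)%:~R : rat) ^+ m)) /=.
by apply: eq_bigr => j _; rewrite !mxE prodrXl.
Qed.

Lemma lefschetz_basic m :
  lefschetz M m = \prod_(i < l) (1 + (-1) ^+ n i * ((a i)%:~R : rat) ^+ m).
Proof.
rewrite /lefschetz; under eq_bigr do rewrite mxtrace_basic mulr_sumr big_mkcond /=.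
rewrite exchange_big /= (eq_bigr _ (fun i _ => addrC _ _)) bigA_distr /=.
apply: eq_bigr => S _; rewrite -[RHS]big_mkcond /= big_split /= prodrXr.
set w := (\sum_(i in S) n i)%N.
have w_le : (w < (topdeg n).+1)%N.
  by rewrite ltnS /topdeg [X in (_ <= X)%N](bigID (mem S)) leq_addr.
rewrite (bigD1 (Ordinal w_le)) //= [X in _ + X]big1 ?addr0 => [|k k_ne].
  by rewrite inE eqxx prodrXl.
by rewrite inE; case: eqP => // k_eq; rewrite -val_eqE /= -k_eq eqxx in k_ne.
Qed.

Lemma basic_eigenvalue_sign : quasi_unipotent M -> forall i, a i = 1 \/ a i = -1.
Proof.
move=> qu i; pose k := n i.
have Si : [set i] \in Sk n k by rewrite inE big_set1.
have [P [P_unit PMP]] := basic k.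
have := eigenvalue_conj_diag (enum_rank_in Si [set i]) P_unit PMP.
rewrite mxE enum_rankK_in // big_set1 eigenvalue_root_char => /(rmorph_root (ratr : rat -> algC)).
rewrite map_char_poly rmorph_int => /qu[m [m_gt0]].
by rewrite -rmorphXn /= -(rmorph1 (intr : int -> algC)) => /intr_inj; apply: int_expr_eq1.
Qed.

Lemma basic_signed_eigenvalue_sqr : quasi_unipotent M ->
  forall i, ((-1) ^+ n i * a i) ^+ 2 = 1.
Proof.
move=> qu i; rewrite exprMn sqrr_sign mul1r.
by case: (basic_eigenvalue_sign qu i) => ->; rewrite ?sqrrN expr1n.
Qed.

Lemma lefschetz_odd_even : quasi_unipotent M -> (0 < l)%N -> forall m,
  lefschetz M m = (2 * if odd m then 2 ^+ l.-1 *+ [forall i, (-1) ^+ n i * a i == 1]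
                        else 2 ^+ l.-1 *+ [forall i, (-1) ^+ n i == 1 :> int])%:~R.
Proof.
move=> qu l_gt0 m; have a_sign := basic_eigenvalue_sign qu.
have prod_sign (d : 'I_l -> int) : (forall i, d i ^+ 2 = 1) ->
    \prod_i (1 + d i) = 2 * (2 ^+ l.-1 *+ [forall i, d i == 1]).
  by move=> d_sign; rewrite prod_1add_sign // card_ord mulrnAr -exprS prednK.
rewrite lefschetz_basic.
have -> : \prod_(i < l) (1 + (-1) ^+ n i * ((a i)%:~R : rat) ^+ m) =
    (\prod_(i < l) (1 + (-1) ^+ n i * (if odd m then a i else 1)))%:~R.
  rewrite rmorph_prod; apply: eq_bigr => i _.
  rewrite rmorphD rmorph1 rmorphM rmorphXn rmorphN1 -rmorphXn /=.
  by case: (a_sign i) => ->; rewrite ?expr1n ?if_same // -[(-1) ^+ m]signr_odd; case: (odd m).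
case: (odd m); first by rewrite prod_sign //; apply: basic_signed_eigenvalue_sqr.
by under eq_bigr do rewrite mulr1; rewrite prod_sign // => i; apply: sqrr_sign.
Qed.

End BasicEigenvalues.

Theorem lemma3p2 (l : nat) (n : 'I_l -> nat) (M : hom_data n) (a : 'I_l -> int)
    (hl : (0 < l)%N)
    (hn1 : forall i : 'I_l, (1 <= n i)%N)
    (hninc : forall i j : 'I_l, (i < j)%N -> (n i < n j)%N)
    (hqu : quasi_unipotent M)
    (hbasic : basic_eigenvalues M a) :
  ((forall i : 'I_l, (-1) ^+ (n i) * a i = 1) ->
     forall r : nat, MPerL (lefschetz M) r <-> r = 1%N) /\
  ((exists i : 'I_l, (-1) ^+ (n i) * a i = -1) ->
     forall r : nat, ~ MPerL (lefschetz M) r).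
Proof.
have L_odd_even m (_ : (0 < m)%N) := lefschetz_odd_even hbasic hqu hl m.
have alpha0 : 2 ^+ l.-1 *+ [forall i, (-1) ^+ n i * a i == 1] = 0 :> int <->
    exists i, (-1) ^+ n i * a i = -1.
  split=> [/eqP | [i ci]].
    rewrite mulrn_eq0 expf_eq0 /= andbF orbF eqb0 => /forallPn[i ci_ne1].
    exists i; apply/eqP; move: (basic_signed_eigenvalue_sqr hbasic hqu i) => /eqP.
    by rewrite sqrf_eq1 (negbTE ci_ne1).
  have /negbTE-> // : ~~ [forall i, (-1) ^+ n i * a i == 1].
  by apply/forallPn; exists i; rewrite ci.
split=> [c1 | /alpha0]; last exact: MPerL_odd_even_eq0 L_odd_even.
apply: MPerL_odd_even_neq0 L_odd_even _.
by apply/eqP => /alpha0[i]; rewrite c1 => /eqP; rewrite -subr_eq0 opprK.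
Qed.
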